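(* Let $B$ be an $n_c\times n_v$ binary matrix whose Tanner graph (the protograph) contains a cycle and has girth $g$. Let $\ell\ge1$, $N=2^\ell$, and let $H$ be the $n_cN\times n_vN$ block matrix obtained from $B$ by replacing each entry $B_{h,u}=1$ by a dyadic permutation matrix $P_{{\mathbf x}_{h,u}}$ (with arbitrary ${\mathbf x}_{h,u}\in\mathbb{F}_2^\ell$) and each entry $B_{h,u}=0$ by the $N\times N$ zero matrix. Then the girth of the Tanner graph of $H$ is at most $2g$.
   Context: Rows and columns of $N\times N$ binary matrices are indexed by $\mathbb{F}_2^\ell$ via ${\mathbf x}=(x_1,\dots,x_\ell)\leftrightarrow 1+\sum_i x_i2^{i-1}$. For ${\mathbf a}\in\mathbb{F}_2^\ell$, $P_{\mathbf a}$ is the $N\times N$ binary matrix with $(P_{\mathbf a})_{{\mathbf x},{\mathbf y}}=1$ iff ${\mathbf y}={\mathbf x}+{\mathbf a}$. The Tanner graph of a binary matrix is the bipartite graph with check nodes = rows, variable nodes = columns, edges at the $1$-entries; the girth is the length of a shortest cycle. *)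

From HB Require Import structures.
From mathcomp Require Import all_boot all_order all_algebra.
Set Implicit Arguments. Unset Strict Implicit. Unset Printing Implicit Defensive.
Import GRing.Theory.
Local Open Scope ring_scope.

(* A binary matrix with rows indexed by the finite type Rw and columns by Cl,
   given as its entry function (a MathComp matrix 'M['F_2]_(m,n) coerces to
   such a function on 'I_m and 'I_n). *)

(* Cycle of length 2k in the Tanner graph of M: distinct check nodes
   c_0..c_{k-1}, distinct variable nodes v_0..v_{k-1}, with edges
   c_i - v_i - c_{i+1 mod k}.  Any simple cycle in a bipartite graph has
   this form, with k >= 2. *)
Definition tanner_cycle (Rw Cl : finType) (M : Rw -> Cl -> 'F_2) (k : nat) : Prop :=
  (2 <= k)%N /\
  exists (c : 'I_k -> Rw) (v : 'I_k -> Cl),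
    injective c /\ injective v /\
    forall i : 'I_k, M (c i) (v i) = 1 /\ M (c (ordS i)) (v i) = 1.

Definition tanner_girth (Rw Cl : finType) (M : Rw -> Cl -> 'F_2) (g : nat) : Prop :=
  (exists k, tanner_cycle M k /\ g = (2 * k)%N) /\
  (forall k, tanner_cycle M k -> (g <= 2 * k)%N).

Notation F2vec l := 'rV['F_2]_l.

Definition dyadic_perm (l : nat) (a : F2vec l) (x y : F2vec l) : 'F_2 :=
  (y == x + a)%:R.

(* Lifted matrix H: block (h,u) is P_{X h u} if B h u = 1, zero otherwise.
   Row (h, x) is row h*N + (index of x), column (u, y) similarly. *)
Definition dyadic_lift (nc nv l : nat) (B : 'M['F_2]_(nc, nv))
  (X : 'I_nc -> 'I_nv -> F2vec l) :
  ('I_nc * F2vec l)%type -> ('I_nv * F2vec l)%type -> 'F_2 :=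
  fun r s => if B r.1 s.1 == 1 then dyadic_perm (X r.1 s.1) r.2 s.2 else 0.

From HB Require Import structures.
From mathcomp Require Import all_boot all_order all_algebra.
From mathcomp Require Import zify.
From Stdlib Require Import ClassicalDescription.

Set Implicit Arguments. Unset Strict Implicit. Unset Printing Implicit Defensive.
Import GRing.Theory.
Local Open Scope ring_scope.

(* Walk around a shortest cycle c_0 v_0 c_1 ... v_{k-1} of the protograph in
   the lifted graph, starting at (c_0, 0).  Crossing v_i shifts the
   F_2^l-coordinate by X(c_i,v_i) + X(c_{i+1},v_i), so one turn returns to
   c_0 with coordinate s, the sum of all these shifts.  If s = 0 the walk
   closes after one turn, otherwise after two, since s + s = 0.  Nodes visited
   during the walk lie above distinct protograph nodes, or above the same node
   in different turns, where their coordinates differ by s <> 0; hence the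
   closed walk is a cycle, of length at most 2g. *)

Lemma ex_minn_prop (P : nat -> Prop) :
  (exists n, P n) -> exists2 m, P m & forall n, P n -> (m <= n)%N.
Proof.
move=> [n Pn].
pose p : pred nat := fun m => if excluded_middle_informative (P m) then true else false.
have pP m : reflect (P m) (p m).
  by rewrite /p; case: excluded_middle_informative; constructor.
have [m /pP Pm minm] := find_ex_minn (ex_intro p n (introT (pP n) Pn)).
by exists m => // j /pP /minm.
Qed.

Lemma tanner_girth_exists (Rw Cl : finType) (M : Rw -> Cl -> 'F_2) k :
  tanner_cycle M k -> exists2 g, tanner_girth M g & (g <= 2 * k)%N.
Proof.
move=> Mk; have [m Mm minm] := ex_minn_prop (ex_intro _ k Mk).
exists (2 * m)%N; last by rewrite leq_mul2l minm ?orbT.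
by split=> [|j /minm le_mj]; [exists m | rewrite leq_mul2l le_mj orbT].
Qed.

Lemma addrr_F2vec l (a : F2vec l) : a + a = 0.
Proof. by apply/matrixP => i j; rewrite !mxE addrr_pchar2 // pchar_Fp. Qed.

Lemma eqn_mod_lt_double m i j : (i < m + m)%N -> (j < m + m)%N ->
  i = j %[mod m] -> [\/ i = j, j = m + i | i = m + j]%N.
Proof.
move=> lt_i lt_j; case: (ltnP i m) => le_im; case: (ltnP j m) => le_jm.
- by rewrite !modn_small // => ->; constructor 1.
- rewrite -(subnKC le_jm) modnDl (modn_small le_im) modn_small; last by lia.
  by move=> e; constructor 2; lia.
- rewrite -(subnKC le_im) modnDl (modn_small le_jm) modn_small; last by lia.
  by move=> e; constructor 3; lia.
- rewrite -(subnKC le_im) -(subnKC le_jm) !modnDl !modn_small; try lia.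
  by move=> e; constructor 1; lia.
Qed.

Section LiftedCycle.

Variables (nc nv l : nat) (B : 'M['F_2]_(nc, nv)) (X : 'I_nc -> 'I_nv -> F2vec l).
Variables (k : nat) (c : 'I_k -> 'I_nc) (v : 'I_k -> 'I_nv).
Hypotheses (k_ge2 : (1 < k)%N) (c_inj : injective c) (v_inj : injective v).
Hypothesis cycle_edges : forall i, B (c i) (v i) = 1 /\ B (c (ordS i)) (v i) = 1.

Let o n : 'I_k := Ordinal (ltn_pmod n (ltnW k_ge2)).
Let check n := c (o n).
Let var n := v (o n).
Let shift n := X (check n) (var n) + X (check n.+1) (var n).
Let offset n := \sum_(j < n) shift j.

Lemma o_mod i j : i = j %[mod k] -> o i = o j.
Proof. by move=> e; apply: val_inj. Qed.

Lemma ordS_o n : ordS (o n) = o n.+1.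
Proof. by apply: val_inj => /=; rewrite -addn1 modnDml addn1. Qed.

Lemma edge_check_var n : B (check n) (var n) = 1.
Proof. by case: (cycle_edges (o n)). Qed.

Lemma edge_next_check_var n : B (check n.+1) (var n) = 1.
Proof. by case: (cycle_edges (o n)); rewrite /check ordS_o. Qed.

Lemma offsetS n : offset n.+1 = offset n + shift n.
Proof. by rewrite /offset big_ord_recr. Qed.

Lemma offset_addk n : offset (k + n) = offset k + offset n.
Proof.
rewrite /offset big_split_ord /=; congr (_ + _); apply: eq_bigr => i _.
by rewrite /shift /check /var -addnS !(o_mod (modnDl _ _)).
Qed.

(* Check node i of the walk is (check i, offset i); variable node i is
   entered from it through the permutation block P_{X (check i) (var i)}. *)
Lemma closed_lifted_walk_cycle K :
  (2 <= K)%N -> (k %| K)%N -> offset K = 0 ->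
  (forall i j, (i < K)%N -> (j < K)%N -> i = j %[mod k] ->
     offset i = offset j -> i = j) ->
  tanner_cycle (dyadic_lift B X) K.
Proof.
move=> K_ge2 dvd_kK offsetK offset_inj; split=> //.
exists (fun i : 'I_K => (check i, offset i)).
exists (fun i : 'I_K => (var i, offset i + X (check i) (var i))).
split; [|split].
- move=> i j [/c_inj e_c e_off]; have e_ij := congr1 val e_c; apply: val_inj.
  exact: offset_inj (ltn_ord i) (ltn_ord j) e_ij e_off.
- move=> i j [/v_inj e_v e_off]; have e_ij := congr1 val e_v; apply: val_inj.
  move: e_off; rewrite /check /var (o_mod e_ij) => /addIr.
  exact: offset_inj (ltn_ord i) (ltn_ord j) e_ij.
- move=> i; rewrite /dyadic_lift /= edge_check_var eqxx /dyadic_perm eqxx.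
  have check_wrap : check (i.+1 %% K)%N = check i.+1.
    by rewrite /check (o_mod (modn_dvdm _ dvd_kK)).
  have offset_wrap : offset (i.+1 %% K)%N = offset i.+1.
    case: (ltnP i.+1 K) => [lt_iK|le_Ki]; first by rewrite modn_small.
    have -> : i.+1 = K by apply/eqP; rewrite eqn_leq le_Ki ltn_ord.
    by rewrite modnn offsetK /offset big_ord0.
  rewrite check_wrap edge_next_check_var eqxx offset_wrap offsetS /shift.
  by rewrite -!addrA addrr_F2vec addr0 eqxx.
Qed.

Lemma lifted_cycle_le_double :
  exists2 K, tanner_cycle (dyadic_lift B X) K & (K <= 2 * k)%N.
Proof.
have [s0|s_neq0] := eqVneq (offset k) 0.
  exists k; last by lia.
  apply: closed_lifted_walk_cycle => //.
  by move=> i j lt_ik lt_jk; rewrite !modn_small.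
exists (k + k)%N; last by lia.
apply: closed_lifted_walk_cycle; [lia | by rewrite dvdn_add | |].
  by rewrite offset_addk addrr_F2vec.
have offset_shifted n : offset n != offset k + offset n.
  by rewrite -{1}[offset n]add0r (inj_eq (addIr _)) eq_sym.
move=> i j lt_i lt_j /(eqn_mod_lt_double lt_i lt_j)[// | e_j | e_i].
  by rewrite e_j offset_addk => /eqP; rewrite (negbTE (offset_shifted i)).
by rewrite e_i offset_addk => /esym/eqP; rewrite (negbTE (offset_shifted j)).
Qed.

End LiftedCycle.

Theorem mainTheorem7 (nc nv : nat) (B : 'M['F_2]_(nc, nv)) (g l : nat)
  (X : 'I_nc -> 'I_nv -> 'rV['F_2]_l) :
  (1 <= l)%N ->
  tanner_girth (fun h u => B h u) g ->
  exists g' : nat, tanner_girth (dyadic_lift B X) g' /\ (g' <= 2 * g)%N.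
Proof.
move=> _ [[k [[k_ge2 [c [v [c_inj [v_inj edges]]]]] ->]] _].
have [K liftK le_K] := lifted_cycle_le_double X k_ge2 c_inj v_inj edges.
have [g' girth_g' le_g'] := tanner_girth_exists liftK.
by exists g'; split=> //; lia.
Qed.
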